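(* Let $P_n(x)=\sum_{k=0}^{n}\frac{(q^{-n},q^{n+2};q)_k\,(q(1+(q-1)x);q)_k\,q^k}{(q,q,q^2;q)_k}$ for $n\ge 0$ (the $q$-Hahn type family ${}_3\phi_2\!\left(q^{-n},q^{c+d+n+1},q(1+(q-1)x);q^{c+1},q^{d+1};q,q\right)$ with $c=0,d=1$). Then the sequence $(\beta_{n+1}/\beta_1)_{n\ge0}$ is the sequence of moments of the orthogonal polynomials $(P_n)_{n\ge0}$.
   Context: $q$ is an indeterminate; we work over $\mathbb{Q}(q)$. The $q$-Bernoulli–Carlitz numbers $\beta_n\in\mathbb{Q}(q)$ are defined by: for all $n\ge0$, $q\sum_{k=0}^{n}\binom{n}{k}q^k\beta_k-\beta_n$ equals $q-1$ if $n=0$, $1$ if $n=1$, and $0$ if $n>1$ (so $\beta_0=1$, $\beta_1=-1/(q+1)$). The $q$-Pochhammer symbol is $(a;q)_k=(1-a)(1-qa)\cdots(1-q^{k-1}a)$ and $(a_1,\dots,a_r;q)_k=\prod_i(a_i;q)_k$. A sequence $(m_n)_{n\ge0}$ with $m_0=1$ is called the sequence of moments of a family of polynomials $(P_n)_{n\ge0}$ ($\deg P_n=n$) if the linear functional $L$ on $\mathbb{Q}(q)[x]$ with $L(x^n)=m_n$ satisfies $L(P_mP_n)=0$ for $m\ne n$ and $L(P_n^2)\neq0$. *)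

From mathcomp Require Import all_boot all_order all_algebra.
Set Implicit Arguments. Unset Strict Implicit. Unset Printing Implicit Defensive.
Import Order.TTheory GRing.Theory.
Local Open Scope ring_scope.

Definition K : fieldType := {fraction {poly rat}}.
Definition qq : K := FracField.tofrac ('X : {poly rat}).

Definition qpoch (R : comNzRingType) (q a : R) (k : nat) : R :=
  \prod_(i < k) (1 - q ^+ i * a).

Definition carlitz_rhs (n : nat) : K :=
  if n == 0%N then qq - 1 else if n == 1%N then 1 else 0.

Definition is_qBernoulliCarlitz (b : nat -> K) : Prop :=
  forall n : nat,
    qq * (\sum_(k < n.+1) ('C(n, k))%:R * qq ^+ k * b k) - b n = carlitz_rhs n.

Definition moment_functional (m : nat -> K) (p : {poly K}) : K :=
  \sum_(i < size p) p`_i * m i.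

Definition is_moment_sequence (m : nat -> K) (P : nat -> {poly K}) : Prop :=
  [/\ m 0%N = 1,
      (forall n, size (P n) = n.+1),
      (forall i j, i <> j -> moment_functional m (P i * P j) = 0)
    & (forall n, moment_functional m (P n * P n) <> 0)].

Definition Pfam (n : nat) : {poly K} :=
  \sum_(k < n.+1)
    ((qpoch qq (qq ^- n) k * qpoch qq (qq ^+ n.+2) k * qq ^+ k)
       / (qpoch qq qq k * qpoch qq qq k * qpoch qq (qq ^+ 2) k)) *:
    qpoch (qq%:P) ((qq%:P) * (1 + (qq - 1)%:P * 'X)) k.

(* Write L for the functional with L(x^n) = beta_n and substitute
   y = 1 + (q - 1) x.  Since y(1 + q x) = q y(x), the Carlitz recurrence
   L(q g(1 + q x) - g(x)) = [x^1] (y g) becomes a q-difference equation for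
   L_y(p) := L(p(y)):  L_y((H(q y) - H(y)) / y) = [x^1] H(y(x)).  As
   x = (1 - y) / (1 - q), the target moments beta_(n+1) / beta_1 are, up to a
   constant, the functional p |-> L_y((1 - y) p), and P_n(x) is the
   3phi2 polynomial hahn n taken at y.  Choosing H = (q^-(k+1) y; q)_(k+l+2)
   evaluates L_y((1 - y) psi_k phi_l) in closed form for
   psi_k = (q^-k y; q)_k and phi_l = (q y; q)_l, so pairing psi_k with hahn n
   gives a balanced 3phi2 sum, which vanishes for k < n and not for k = n by
   the q-Pfaff-Saalschuetz summation.  Since deg psi_k = k, this is
   orthogonality.  The summation itself is proved by partial fractions:
   clearing denominators turns the sum into a polynomial of degree n in q^k,
   determined by its values at the n + 1 poles. *)

From HB Require Import structures.
From mathcomp Require Import all_boot all_order all_algebra.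
From mathcomp Require Import ring zify.
Set Implicit Arguments. Unset Strict Implicit. Unset Printing Implicit Defensive.
Import GRing.Theory.
Local Open Scope ring_scope.

Section ScaledVariable.
Variable R : comNzRingType.
Implicit Types (c : R) (p : {poly R}).

Lemma coef_comp_scaleX c p i : (p \Po (c%:P * 'X))`_i = c ^+ i * p`_i.
Proof.
have -> : p \Po (c%:P * 'X) = \poly_(j < size p) (c ^+ j * p`_j).
  rewrite comp_polyE poly_def; apply: eq_bigr => j _.
  by rewrite exprMn -rmorphXn mul_polyC scalerA mulrC.
by rewrite coef_poly; case: ltnP => // le_pi; rewrite nth_default ?mulr0.
Qed.

Lemma mulX_drop1 p : 'X * drop_poly 1 p = p - (p`_0)%:P.
Proof.
apply/polyP => i; rewrite coefXM coef_drop_poly coefB coefC.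
by case: i => [|i] /=; rewrite ?subrr ?subr0 ?addn1.
Qed.

Lemma drop1_comp_scaleX c p :
  drop_poly 1 (p \Po (c%:P * 'X) - p) = c *: (drop_poly 1 p \Po (c%:P * 'X)) - drop_poly 1 p.
Proof.
apply/polyP => i; rewrite coef_drop_poly !coefB coefZ !coef_comp_scaleX coef_drop_poly.
by rewrite addn1 exprS mulrA.
Qed.

End ScaledVariable.

Lemma coef_size_neq0 (R : nzRingType) (p : {poly R}) n : size p = n.+1 -> p`_n != 0.
Proof.
by move=> size_p; rewrite -[n]/(n.+1.-1) -size_p -lead_coefE lead_coef_eq0 -size_poly_eq0 size_p.
Qed.

Lemma size_sub_lead (F : fieldType) (p r : {poly F}) n :
  (size p <= n.+1)%N -> size r = n.+1 -> (size (p - (p`_n / r`_n) *: r)%R <= n)%N.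
Proof.
move=> le_pn size_r; apply/leq_sizeP => j le_nj; rewrite coefB coefZ.
have r_lead := coef_size_neq0 size_r.
have [-> | ne_jn] := eqVneq j n; first by rewrite divfK ?subrr.
have lt_nj : (n < j)%N by rewrite ltn_neqAle eq_sym ne_jn.
have le_pj : (size p <= j)%N := leq_trans le_pn lt_nj.
have le_rj : (size r <= j)%N by rewrite size_r.
by rewrite (nth_default _ le_pj) (nth_default _ le_rj) mulr0 subr0.
Qed.

Lemma graded_basis_expansion (F : fieldType) (b : nat -> {poly F}) n (p : {poly F}) :
    (forall k, size (b k) = k.+1) -> (size p <= n)%N ->
  exists c : nat -> F, p = \sum_(k < n) c k *: b k.
Proof.
move=> size_b; elim: n p => [|n IHn] p le_pn.
  by exists (fun=> 0); rewrite big_ord0; apply/eqP; rewrite -size_poly_leq0.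
have [c p_eq] := IHn _ (size_sub_lead le_pn (size_b n)).
exists (fun k => if k == n then p`_n / (b n)`_n else c k).
rewrite big_ord_recr /= eqxx -[LHS](subrK ((p`_n / (b n)`_n) *: b n)) p_eq.
by congr (_ + _); apply: eq_bigr => k _; rewrite ltn_eqF.
Qed.

Lemma eq_poly_at_nodes (F : fieldType) (p r : {poly F}) (s : seq F) :
    uniq s -> (size p <= size s)%N -> (size r <= size s)%N ->
  (forall z, z \in s -> p.[z] = r.[z]) -> p = r.
Proof.
move=> s_uniq le_ps le_rs eq_ps; apply/eqP; rewrite -subr_eq0; apply/negPn/negP => pr_neq0.
have le_prs : (size (p - r)%R <= size s)%N.
  by rewrite (leq_trans (size_polyD _ _)) // size_polyN geq_max le_ps.
have roots_pr : all (root (p - r)) s.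
  by apply/allP => z zs; rewrite rootE hornerD hornerN eq_ps ?subrr.
by have := max_poly_roots pr_neq0 roots_pr s_uniq; rewrite ltnNge le_prs.
Qed.

Section QPochhammer.
Variable R : comNzRingType.
Implicit Types (q a : R) (m n : nat).

Lemma qpoch0 q a : qpoch q a 0 = 1.
Proof. by rewrite /qpoch big_ord0. Qed.

Lemma qpochS q a n : qpoch q a n.+1 = qpoch q a n * (1 - q ^+ n * a).
Proof. by rewrite /qpoch big_ord_recr. Qed.

Lemma qpochSl q a n : qpoch q a n.+1 = (1 - a) * qpoch q (q * a) n.
Proof.
rewrite /qpoch big_ord_recl expr0 mul1r; congr (_ * _).
by apply: eq_bigr => i _; rewrite exprS mulrCA mulrA.
Qed.

Lemma qpoch_shift q a n : (1 - a) * qpoch q (q * a) n = qpoch q a n * (1 - q ^+ n * a).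
Proof. by rewrite -qpochSl qpochS. Qed.

Lemma qpochD q a m n : qpoch q a (m + n) = qpoch q a m * qpoch q (q ^+ m * a) n.
Proof.
elim: n => [|n IHn]; first by rewrite addn0 qpoch0 mulr1.
by rewrite addnS !qpochS IHn exprD; ring.
Qed.

Lemma qpoch_eq0 q a n i : (i < n)%N -> q ^+ i * a = 1 -> qpoch q a n = 0.
Proof.
by move=> lt_in qia; rewrite -(subnKC lt_in) qpochD qpochS qia subrr mulr0 mul0r.
Qed.

Lemma qpoch_shiftB q a n :
  qpoch q (q * a) n.+1 - qpoch q a n.+1 = a * (1 - q ^+ n.+1) * qpoch q (q * a) n.
Proof. by rewrite qpochS qpochSl exprSr; ring. Qed.

Lemma rmorph_qpoch (S : comNzRingType) (f : {rmorphism R -> S}) q a n :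
  f (qpoch q a n) = qpoch (f q) (f a) n.
Proof.
rewrite rmorph_prod; apply: eq_bigr => i _.
by rewrite rmorphB rmorph1 rmorphM rmorphXn.
Qed.

End QPochhammer.

Section QPochhammerPoly.
Variable R : idomainType.
Implicit Types (c a b z : R) (n : nat).

Definition qpochX c a n : {poly R} := qpoch c%:P (a%:P * 'X) n.

Lemma qpoch_neq0 c a n : (forall i, (i < n)%N -> c ^+ i * a != 1) -> qpoch c a n != 0.
Proof. by move=> ne1; apply/prodf_neq0 => i _; rewrite subr_eq0 eq_sym ne1. Qed.

Lemma horner_qpoch c (r : {poly R}) z n : (qpoch c%:P r n).[z] = qpoch c r.[z] n.
Proof. by rewrite -horner_evalE rmorph_qpoch /= !horner_evalE hornerC. Qed.

Lemma horner_qpochX c a z n : (qpochX c a n).[z] = qpoch c (a * z) n.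
Proof. by rewrite horner_qpoch hornerCM hornerX. Qed.

Lemma comp_qpoch c (r s : {poly R}) n : qpoch c%:P r n \Po s = qpoch c%:P (r \Po s) n.
Proof. by rewrite (rmorph_qpoch (comp_poly s)) /= comp_polyC. Qed.

Lemma comp_qpochX c a (s : {poly R}) n : qpochX c a n \Po s = qpoch c%:P (a%:P * s) n.
Proof. by rewrite comp_qpoch comp_polyM comp_polyC comp_polyX. Qed.

Lemma qpochX_comp_scale c a b n : qpochX c a n \Po (b%:P * 'X) = qpochX c (a * b) n.
Proof. by rewrite comp_qpochX mulrA -polyCM. Qed.

Lemma size_qpochX c a n : c != 0 -> a != 0 -> size (qpochX c a n) = n.+1.
Proof.
move=> c_neq0 a_neq0; elim: n => [|n IHn]; first by rewrite /qpochX qpoch0 size_poly1.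
have factorE : 1 - c%:P ^+ n * (a%:P * 'X) = (- (c ^+ n * a))%:P * 'X + 1%:P.
  by rewrite -rmorphXn mulrA -polyCM polyCN mulNr addrC.
have ca_neq0 : - (c ^+ n * a) != 0 by rewrite oppr_eq0 mulf_neq0 ?expf_neq0.
have size_factor : size (1 - c%:P ^+ n * (a%:P * 'X)) = 2%N.
  by rewrite factorE size_MXaddC polyC_eq0 (negbTE ca_neq0) size_polyC ca_neq0.
rewrite /qpochX qpochS size_mul -/(qpochX c a n) ?IHn ?size_factor ?addn2 //.
  by rewrite -size_poly_eq0 IHn.
by rewrite -size_poly_eq0 size_factor.
Qed.

Lemma qpochX_split c b m n :
  c ^+ m * b = 1 -> qpochX c b (m + n.+1) = qpochX c b m * ((1 - 'X) * qpochX c c n).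
Proof.
move=> cb1; rewrite /qpochX qpochD -rmorphXn mulrA -polyCM cb1 polyC1 mul1r.
by rewrite qpochSl.
Qed.

Lemma qpochX_shiftB c a n :
  qpochX c (c * a) n.+1 - qpochX c a n.+1 = 'X * ((a * (1 - c ^+ n.+1)) *: qpochX c (c * a) n).
Proof.
rewrite /qpochX polyCM -mulrA qpoch_shiftB -mul_polyC polyCM polyCB polyC1 rmorphXn.
by ring.
Qed.

End QPochhammerPoly.

Section NotRootOfUnity.
Variables (F : fieldType) (q : F).
Hypothesis qX_inj : injective (GRing.exp q).

Lemma q_neq0 : q != 0.
Proof.
by apply/eqP => q0; have := @qX_inj 1 2; rewrite q0 expr1 expr2 mulr0 => /(_ erefl).
Qed.

Lemma qX_neq0 a : q ^+ a != 0.
Proof. exact/expf_neq0/q_neq0. Qed.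

Lemma qX_eq1 a : (q ^+ a == 1) = (a == 0%N).
Proof. by rewrite -[1](expr0 q) (inj_eq qX_inj). Qed.

Lemma onem_qX_neq0 a : (0 < a)%N -> 1 - q ^+ a != 0.
Proof. by move=> a_gt0; rewrite subr_eq0 eq_sym qX_eq1 -lt0n. Qed.

Lemma q_neq1 : q != 1.
Proof. by have := qX_eq1 1; rewrite expr1 => ->. Qed.

Lemma onem_q_neq0 : 1 - q != 0.
Proof. by rewrite subr_eq0 eq_sym q_neq1. Qed.

Lemma qXV_eq1 a : (q ^- a == 1) = (a == 0%N).
Proof. by rewrite invr_eq1 qX_eq1. Qed.

Lemma onem_qVX_neq0 a : (0 < a)%N -> 1 - q^-1 ^+ a != 0.
Proof. by move=> a_gt0; rewrite subr_eq0 eq_sym exprVn qXV_eq1 -lt0n. Qed.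

Lemma qX_divX_eq1 a b : (q ^+ a / q ^+ b == 1) = (a == b).
Proof.
apply/eqP/eqP => [/divr1_eq/qX_inj // | ->].
exact/divff/qX_neq0.
Qed.

Lemma qpoch_qX_neq0 a n : (0 < a)%N -> qpoch q (q ^+ a) n != 0.
Proof.
move=> a_gt0; apply: qpoch_neq0 => i _.
by rewrite -exprD qX_eq1 -lt0n addn_gt0 a_gt0 orbT.
Qed.

Lemma qpoch_qq_neq0 n : qpoch q q n != 0.
Proof. exact: (@qpoch_qX_neq0 1). Qed.

Lemma qpoch_qXV_neq0 a n : (n <= a)%N -> qpoch q (q ^- a) n != 0.
Proof.
move=> le_na; apply: qpoch_neq0 => i lt_in.
by rewrite qX_divX_eq1 ltn_eqF // (leq_trans lt_in).
Qed.

Lemma qpochV_qVX_neq0 a n : (0 < a)%N -> qpoch q^-1 (q^-1 ^+ a) n != 0.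
Proof.
move=> a_gt0; apply: qpoch_neq0 => i _.
by rewrite -exprD exprVn qXV_eq1 -lt0n addn_gt0 a_gt0 orbT.
Qed.

Lemma qX_mul_qVX a b : q ^+ (a + b) * q^-1 ^+ b = q ^+ a.
Proof. by rewrite exprVn exprD mulfK ?qX_neq0. Qed.

Lemma qX_mul_qVXn a : q ^+ a * q^-1 ^+ a = 1.
Proof. by rewrite exprVn mulfV ?qX_neq0. Qed.

Lemma q_mul_qVXS a : q * q^-1 ^+ a.+1 = q^-1 ^+ a.
Proof. by rewrite exprS mulrA mulfV ?q_neq0 ?mul1r. Qed.

Lemma qX_mul_qVXD a b : q ^+ a * q^-1 ^+ (b + a) = q^-1 ^+ b.
Proof. by rewrite exprD mulrCA -exprMn mulfV ?q_neq0 // expr1n mulr1. Qed.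

End NotRootOfUnity.

Section Moments.
Variables (R : comNzRingType) (m : nat -> R).

Definition moment (p : {poly R}) : R := \sum_(i < size p) p`_i * m i.

Lemma momentE n (p : {poly R}) : (size p <= n)%N -> moment p = \sum_(i < n) p`_i * m i.
Proof.
move=> le_pn; rewrite /moment (big_ord_widen _ (fun i => p`_i * m i) le_pn) big_mkcond.
apply: eq_bigr => i _; case: ltnP => // le_pi.
by rewrite nth_default // mul0r.
Qed.

Lemma moment_is_scalar : scalar moment.
Proof.
move=> c p r; set n := maxn (size p) (size r).
have le_sum : (size (c *: p + r)%R <= n)%N.
  rewrite (leq_trans (size_polyD _ _)) // geq_max leq_maxr andbT.
  by rewrite (leq_trans (size_scale_leq _ _)) ?leq_maxl.
rewrite !(momentE le_sum, @momentE n p, @momentE n r) ?leq_maxl ?leq_maxr //.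
by rewrite mulr_sumr -big_split; apply: eq_bigr => i _; rewrite coefD coefZ mulrDl mulrA.
Qed.

HB.instance Definition _ :=
  GRing.isLinear.Build R {poly R} R *%R moment moment_is_scalar.

Lemma moment_Xn i : moment 'X^i = m i.
Proof.
rewrite (@momentE i.+1) ?size_polyXn // big_ord_recr /= coefXn eqxx mul1r.
by rewrite big1 ?add0r // => j _; rewrite coefXn ltn_eqF // mul0r.
Qed.

End Moments.

Lemma moment_mulX (R : comNzRingType) (m : nat -> R) (p : {poly R}) :
  moment m ('X * p) = moment (fun i => m i.+1) p.
Proof.
rewrite (@momentE _ _ (size p).+1); last first.
  by rewrite (leq_trans (size_polyMleq _ _)) // size_polyX.
by rewrite big_ord_recl coefXM mul0r add0r; apply: eq_bigr => i _; rewrite coefXM.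
Qed.

Section Carlitz.
Variables (F : fieldType) (q : F).

Definition qcarlitz_rhs (n : nat) : F :=
  if n == 0%N then q - 1 else if n == 1%N then 1 else 0.

Definition is_qcarlitz (b : nat -> F) : Prop :=
  forall n, q * (\sum_(k < n.+1) ('C(n, k))%:R * q ^+ k * b k) - b n = qcarlitz_rhs n.

Definition ycoord : {poly F} := 1 + (q - 1)%:P * 'X.

Variable beta : nat -> F.
Hypothesis beta_carlitz : is_qcarlitz beta.

Lemma carlitz_comp_Xn i :
  moment beta (q *: ('X^i \Po (1 + q%:P * 'X)) - 'X^i) = (ycoord * 'X^i)`_1.
Proof.
have binomialE : 'X^i \Po (1 + q%:P * 'X) = \sum_(j < i.+1) ('C(i, j)%:R * q ^+ j) *: 'X^j.
  rewrite rmorphXn /= comp_polyX exprDn; apply: eq_bigr => j _.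
  by rewrite expr1n mul1r exprMn -rmorphXn mul_polyC -scaler_nat scalerA mulrC.
rewrite linearB linearZ /= {}binomialE linear_sum moment_Xn /=.
under eq_bigr do rewrite linearZ /= moment_Xn.
rewrite beta_carlitz /qcarlitz_rhs /ycoord mulrDl mul1r -mulrA mul_polyC.
rewrite coefD coefZ coefXM coefXn.
by case: i => [|[|i]]; rewrite /= ?coefXn /= ?mulr1 ?mulr0 ?add0r ?addr0.
Qed.

Lemma carlitz_comp g : moment beta (q *: (g \Po (1 + q%:P * 'X)) - g) = (ycoord * g)`_1.
Proof.
rewrite -[g]coefK poly_def; elim/big_rec: _ => [|i p _ IHp].
  by rewrite comp_poly0 scaler0 subr0 linear0 mulr0 coef0.
rewrite comp_polyD comp_polyZ scalerDr opprD addrACA linearD /= mulrDr coefD IHp.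
by rewrite scalerA mulrC -scalerA -scalerBr linearZ /= carlitz_comp_Xn -scalerAr coefZ.
Qed.

Lemma ycoord_comp_shift : ycoord \Po (1 + q%:P * 'X) = q%:P * ycoord.
Proof.
rewrite /ycoord comp_polyD comp_polyC comp_polyM comp_polyC comp_polyX.
rewrite polyCB polyC1; ring.
Qed.

Lemma comp_ycoord_onemX : (1 - 'X) \Po ycoord = (1 - q)%:P * 'X.
Proof.
rewrite comp_polyB comp_polyX -polyC1 comp_polyC /ycoord polyCB !polyC1; ring.
Qed.

Lemma coef1_comp_ycoord (A B : {poly F}) :
  ((A * ((1 - 'X) * B)) \Po ycoord)`_1 = (1 - q) * A.[1] * B.[1].
Proof.
rewrite !comp_polyM comp_ycoord_onemX mulrCA -!mulrA coefCM coefXM /= -horner_coef0.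
by rewrite hornerM !horner_comp /ycoord hornerD hornerC hornerCM hornerX mulr0 addr0 mulrA.
Qed.

Definition ymoment (p : {poly F}) : F := moment beta (p \Po ycoord).

Lemma ymoment_is_scalar : scalar ymoment.
Proof. by move=> c p r; rewrite /ymoment comp_polyD comp_polyZ linearP. Qed.

HB.instance Definition _ :=
  GRing.isLinear.Build F {poly F} F *%R ymoment ymoment_is_scalar.

Lemma ymoment_qdiff H : ymoment (drop_poly 1 (H \Po (q%:P * 'X) - H)) = (H \Po ycoord)`_1.
Proof.
set G := drop_poly 1 H.
have shiftE : G \Po (q%:P * 'X) \Po ycoord = G \Po ycoord \Po (1 + q%:P * 'X).
  by rewrite -!comp_polyA ycoord_comp_shift comp_polyM comp_polyC comp_polyX.
rewrite drop1_comp_scaleX /ymoment comp_polyB comp_polyZ shiftE carlitz_comp.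
rewrite -[ycoord in ycoord * _]comp_polyX -comp_polyM mulX_drop1 comp_polyB comp_polyC.
by rewrite coefB coefC subr0.
Qed.

End Carlitz.

Section Saalschutz.
Variables (F : fieldType) (q : F).
Hypothesis qX_inj : injective (GRing.exp q).

Definition hahn_coef n l : F :=
  (qpoch q (q ^- n) l * qpoch q (q ^+ n.+2) l * q ^+ l) /
  (qpoch q q l * qpoch q q l * qpoch q (q ^+ 2) l).

Definition saal_sum n k : F :=
  \sum_(l < n.+1) hahn_coef n l * (qpoch q q l / (1 - q ^+ (k + l + 2))).

Variable n : nat.

(* [saal_sum n k * (q^(k+2); q)_(n+1)] as a polynomial in z = q^k
   ([saal_sum_mul]); [saal_node j] is its value at the pole z = q^-(j+2). *)
Definition saal_poly : {poly F} :=
  \sum_(l < n.+1) (hahn_coef n l * qpoch q q l) *: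
    (qpochX q (q ^+ 2) l * qpochX q (q ^+ (l + 3)) (n - l)).

Definition saal_node j : F :=
  hahn_coef n j * qpoch q q j * qpoch q (q^-1 ^+ j) j * qpoch q q (n - j).

Definition saal_const : F := qpoch q q n / qpoch q^-1 (q^-1 ^+ 2) n.

Lemma horner_saal_poly z : saal_poly.[z] = \sum_(l < n.+1)
  hahn_coef n l * qpoch q q l * (qpoch q (q ^+ 2 * z) l * qpoch q (q ^+ (l + 3) * z) (n - l)).
Proof.
by rewrite horner_sum; apply: eq_bigr => l _; rewrite hornerZ hornerM !horner_qpochX.
Qed.

Lemma saal_poly_node j : (j <= n)%N -> saal_poly.[q^-1 ^+ j.+2] = saal_node j.
Proof.
move=> le_jn; rewrite horner_saal_poly (bigD1 (Ordinal (le_jn : (j < n.+1)%N))) //=.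
rewrite big1 ?addr0 => [|l ne_lj].
  have -> : q ^+ 2 * q^-1 ^+ j.+2 = q^-1 ^+ j by rewrite -[j.+2]addn2 qX_mul_qVXD.
  have -> : q ^+ (j + 3) * q^-1 ^+ j.+2 = q.
    by rewrite (_ : (j + 3 = 1 + j.+2)%N) ?qX_mul_qVX //; lia.
  by rewrite /saal_node !mulrA.
have [lt_lj | lt_jl | eq_lj] := ltngtP l j.
- have lt_n : (j - l.+1 < n - l)%N by lia.
  rewrite (@qpoch_eq0 _ _ _ _ _ lt_n) ?mulr0 // mulrA -exprD.
  by rewrite (_ : (j - l.+1 + (l + 3) = j.+2)%N) ?qX_mul_qVXn //; lia.
- rewrite (@qpoch_eq0 _ q (q ^+ 2 * _) _ _ lt_jl) ?mul0r ?mulr0 //.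
  by rewrite mulrA -exprD addn2 qX_mul_qVXn.
- by move: ne_lj; rewrite -val_eqE /= eq_lj eqxx.
Qed.

Lemma saal_node_rec j : (j < n)%N ->
  saal_node j.+1 * (1 - q^-1 ^+ j.+2) = saal_node j * (1 - q^-1 ^+ (n + j.+2)).
Proof.
move=> lt_jn; rewrite /saal_node /hahn_coef (_ : (n - j = (n - j.+1).+1)%N); last lia.
have -> : qpoch q (q^-1 ^+ j.+1) j.+1 = (1 - q^-1 ^+ j.+1) * qpoch q (q^-1 ^+ j) j.
  by rewrite qpochSl q_mul_qVXS.
have qn_split : q ^+ n = q ^+ j * q ^+ (n - j.+1) * q.
  by rewrite -exprD -exprSr; congr (_ ^+ _); lia.
have C_neq0 := qpoch_qq_neq0 qX_inj j.
have D_neq0 : qpoch q (q ^+ 2) j != 0 by exact: qpoch_qX_neq0.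
have xq_neq1 : 1 - q ^+ j * q != 0 by rewrite -exprSr onem_qX_neq0.
have xqq_neq1 : 1 - q ^+ j * (q * q) != 0 by rewrite -expr2 -exprD onem_qX_neq0 ?addn2.
rewrite !qpochS; move: C_neq0 D_neq0.
move: (qpoch q q j) (qpoch q (q ^+ 2) j) (qpoch q (q ^- n) j) (qpoch q (q ^+ n.+2) j).
move: (qpoch q (q^-1 ^+ j) j) (qpoch q q (n - j.+1)) => E G C D A B C_neq0 D_neq0.
rewrite !exprVn (exprD q n) !exprSr qn_split expr0.
move: xq_neq1 xqq_neq1 (qX_neq0 qX_inj j) (qX_neq0 qX_inj (n - j.+1)) (q_neq0 qX_inj).
move: (q ^+ j) (q ^+ (n - j.+1)) => x y xq_neq1 xqq_neq1 x_neq0 y_neq0 q_neq0.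
by field; rewrite q_neq0 x_neq0 y_neq0 C_neq0 D_neq0 xq_neq1 xqq_neq1.
Qed.

Lemma saal_node_eq j : (j <= n)%N -> saal_node j = saal_const * qpoch q^-1 (q^-1 ^+ j.+2) n.
Proof.
elim: j => [_ | j IHj lt_jn].
  rewrite /saal_const divfK; last exact: qpochV_qVX_neq0.
  by rewrite /saal_node /hahn_coef !qpoch0 subn0 expr0 !(mul1r, invr1).

apply: (mulIf (onem_qVX_neq0 qX_inj (ltn0Sn j.+1))).
rewrite saal_node_rec // (IHj (ltnW lt_jn)) -[LHS]mulrA -[RHS]mulrA; congr (_ * _).
by rewrite [RHS]mulrC [q^-1 ^+ j.+3]exprS qpoch_shift exprD.
Qed.

Lemma saal_poly_eq : saal_poly = saal_const *: qpochX q^-1 1 n.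
Proof.
apply: (@eq_poly_at_nodes _ _ _ [seq q^-1 ^+ j.+2 | j <- iota 0 n.+1]).
- rewrite map_inj_uniq ?iota_uniq // => a b.
  by rewrite !exprVn => /invr_inj/qX_inj [].
- rewrite size_map size_iota (leq_trans (size_sum _ _ _)) //; apply/bigmax_leqP => l _.
  rewrite (leq_trans (size_scale_leq _ _)) // (leq_trans (size_polyMleq _ _)) //.
  by rewrite !size_qpochX ?qX_neq0 ?q_neq0 //; have := ltn_ord l; lia.
- rewrite size_map size_iota (leq_trans (size_scale_leq _ _)) //.
  by rewrite size_qpochX ?oner_neq0 ?invr_neq0 ?q_neq0.
move=> z /mapP[j]; rewrite mem_iota add0n => /andP[_ lt_jn] ->.
by rewrite saal_poly_node // saal_node_eq // hornerZ horner_qpochX mul1r.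
Qed.

Lemma saal_sum_mul k : saal_sum n k * qpoch q (q ^+ (k + 2)) n.+1 = saal_poly.[q ^+ k].
Proof.
rewrite horner_saal_poly /saal_sum mulr_suml; apply: eq_bigr => -[l /= lt_ln] _.
rewrite (_ : n.+1 = l + (n - l).+1)%N; last lia.
rewrite qpochD qpochSl.
have onem_neq0 : 1 - q ^+ (k + l + 2) != 0 by rewrite onem_qX_neq0 // addn2.
have -> : q ^+ l * q ^+ (k + 2) = q ^+ (k + l + 2) by rewrite -exprD; congr (_ ^+ _); lia.
have -> : q * q ^+ (k + l + 2) = q ^+ (l + 3) * q ^+ k.
  by rewrite -exprS -exprD; congr (_ ^+ _); lia.
have -> : q ^+ (k + 2) = q ^+ 2 * q ^+ k by rewrite -exprD addnC.
by field.
Qed.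

Lemma saal_sum_eq0 k : (k < n)%N -> saal_sum n k = 0.
Proof.
move=> lt_kn; have den_neq0 : qpoch q (q ^+ (k + 2)) n.+1 != 0.
  by apply: qpoch_qX_neq0; rewrite // addn2.
apply: (mulIf den_neq0); rewrite mul0r saal_sum_mul saal_poly_eq hornerZ horner_qpochX.
by rewrite mul1r (qpoch_eq0 lt_kn) ?mulr0 // mulrC qX_mul_qVXn.
Qed.

Lemma saal_sum_neq0 : saal_sum n n != 0.
Proof.
have := saal_sum_mul n; rewrite saal_poly_eq hornerZ horner_qpochX mul1r => sum_eq.
suff : saal_const * qpoch q^-1 (q ^+ n) n != 0.
  by rewrite -sum_eq mulf_eq0 negb_or => /andP[].
rewrite mulf_neq0 //.
  by rewrite mulf_neq0 ?invr_neq0 ?qpochV_qVX_neq0 ?qpoch_qq_neq0.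
apply: qpoch_neq0 => i lt_in.
by rewrite exprVn mulrC (qX_divX_eq1 qX_inj) gtn_eqF.
Qed.

End Saalschutz.

Section HahnOrthogonality.
Variables (F : fieldType) (q : F).
Hypothesis qX_inj : injective (GRing.exp q).

Local Notation psi k := (qpochX q (q ^- k) k).
Local Notation phi l := (qpochX q q l).

Definition hahn n : {poly F} := \sum_(l < n.+1) hahn_coef q n l *: phi l.

Definition psi_weight k : F := (1 - q) * qpoch q (q ^- k.+1) k.+1 / q ^- k.+1.

Lemma size_psi k : size (psi k) = k.+1.
Proof. by rewrite size_qpochX ?invr_neq0 ?qX_neq0 ?q_neq0. Qed.

Lemma psi_weight_neq0 k : psi_weight k != 0.
Proof.
by rewrite mulf_neq0 ?invr_neq0 ?qX_neq0 // mulf_neq0 ?qpoch_qXV_neq0 ?onem_q_neq0.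
Qed.

Variable beta : nat -> F.
Hypothesis beta_carlitz : is_qcarlitz q beta.
Local Notation ymoment := (ymoment q beta).

Lemma ymoment_psi_phi k l :
  ymoment (psi k * ((1 - 'X) * phi l)) =
  psi_weight k * (qpoch q q l / (1 - q ^+ (k + l + 2))).
Proof.
set a := q ^- k.+1; set H := qpochX q a (k + l + 2).
have qXa : q ^+ k.+1 * a = 1 by rewrite mulfV ?qX_neq0.
have H_split : H = qpochX q a k.+1 * ((1 - 'X) * phi l).
  by rewrite /H -qpochX_split //; congr qpochX; lia.
have H_qdiff : drop_poly 1 (H \Po (q%:P * 'X) - H) =
                (a * (1 - q ^+ (k + l + 2))) *: (psi k * ((1 - 'X) * phi l)).
  rewrite /H qpochX_comp_scale mulrC (_ : (k + l + 2 = (k + l.+1).+1)%N); last lia.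
  have qa : q * a = q ^- k by rewrite /a exprS invfM mulVKf ?q_neq0.
  by rewrite qpochX_shiftB mulrC (drop_polyMXn_id 1) -qpochX_split ?qa ?divff ?qX_neq0.
have := ymoment_qdiff beta_carlitz H; rewrite H_qdiff linearZ /= H_split coef1_comp_ycoord.
rewrite !horner_qpochX !mulr1 => ymoment_eq.
have a_neq0 : a != 0 by rewrite invr_neq0 ?qX_neq0.
have onem_neq0 : 1 - q ^+ (k + l + 2) != 0 by rewrite onem_qX_neq0 // addn2.
rewrite -[ymoment _](mulKf (mulf_neq0 a_neq0 onem_neq0)) ymoment_eq /psi_weight -/a.
by field; rewrite a_neq0 onem_neq0.
Qed.

Lemma ymoment_psi_hahn k n :
  ymoment (psi k * ((1 - 'X) * hahn n)) = psi_weight k * saal_sum q n k.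
Proof.
rewrite /hahn /saal_sum !mulr_sumr linear_sum; apply: eq_bigr => l _ /=.
by rewrite -!scalerAr linearZ /= ymoment_psi_phi mulrCA.
Qed.

Lemma ymoment_hahn_orth n (p : {poly F}) :
  (size p <= n)%N -> ymoment ((1 - 'X) * (p * hahn n)) = 0.
Proof.
case/(graded_basis_expansion size_psi) => c ->.
rewrite mulr_suml mulr_sumr linear_sum big1 // => k _.
rewrite -scalerAl -scalerAr linearZ /= mulrCA ymoment_psi_hahn saal_sum_eq0 //.
by rewrite mulr0 mulr0.
Qed.

Lemma hahn_coef_diag_neq0 n : hahn_coef q n n != 0.
Proof.
rewrite /hahn_coef mulf_neq0 ?invr_neq0 // !mulf_neq0 ?qX_neq0 ?qpoch_qq_neq0 //.
- exact: qpoch_qXV_neq0.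
- exact: qpoch_qX_neq0.
- exact: qpoch_qX_neq0.
Qed.

Lemma size_hahn n : size (hahn n) = n.+1.
Proof.
rewrite /hahn big_ord_recr /= addrC size_polyDl size_scale ?hahn_coef_diag_neq0 //.
  by rewrite size_qpochX ?q_neq0.
rewrite size_qpochX ?q_neq0 // ltnS (leq_trans (size_sum _ _ _)) //.
apply/bigmax_leqP => l _; rewrite (leq_trans (size_scale_leq _ _)) //.
by rewrite size_qpochX ?q_neq0.
Qed.

Lemma ymoment_hahn_norm_neq0 n : ymoment ((1 - 'X) * (hahn n * hahn n)) != 0.
Proof.
set c := (hahn n)`_n / (psi n)`_n.
have lower_size : (size (hahn n - c *: psi n)%R <= n)%N.
  by apply: size_sub_lead; rewrite ?size_hahn ?size_psi.
rewrite -{1}(subrK (c *: psi n) (hahn n)) [(_ + c *: _) * _]mulrDl mulrDr linearD /=.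
rewrite ymoment_hahn_orth // add0r.
rewrite -scalerAl -scalerAr linearZ /= mulrCA ymoment_psi_hahn.
have c_neq0 : c != 0 by rewrite mulf_neq0 ?invr_neq0 ?coef_size_neq0 ?size_hahn ?size_psi.
by rewrite mulf_neq0 // mulf_neq0 ?psi_weight_neq0 ?saal_sum_neq0.
Qed.

End HahnOrthogonality.

Section MomentSequence.
Variables (F : fieldType) (q : F).
Hypothesis qX_inj : injective (GRing.exp q).

Definition qhahn_family n : {poly F} :=
  \sum_(k < n.+1)
    ((qpoch q (q ^- n) k * qpoch q (q ^+ n.+2) k * q ^+ k)
       / (qpoch q q k * qpoch q q k * qpoch q (q ^+ 2) k)) *:
    qpoch (q%:P) ((q%:P) * (1 + (q - 1)%:P * 'X)) k.

Lemma qhahn_familyE n : qhahn_family n = hahn q n \Po ycoord q.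
Proof.
rewrite /hahn linear_sum; apply: eq_bigr => l _.
by rewrite /= comp_polyZ comp_qpochX.
Qed.

Lemma size_qhahn_family n : size (qhahn_family n) = n.+1.
Proof.
rewrite qhahn_familyE size_comp_poly2 ?size_hahn // /ycoord addrC -polyC1.
by rewrite size_MXaddC oner_eq0 andbF size_polyC subr_eq0 (q_neq1 qX_inj).
Qed.

Variable beta : nat -> F.
Hypothesis beta_carlitz : is_qcarlitz q beta.

Lemma carlitz_beta0 : beta 0 = 1.
Proof.
have := beta_carlitz 0; rewrite /qcarlitz_rhs big_ord1 /= bin0 expr0 !mul1r => carlitz0.
have : (beta 0 - 1) * (q - 1) = (q * beta 0 - beta 0) - (q - 1) by ring.
rewrite carlitz0 subrr => /eqP; rewrite mulf_eq0 !subr_eq0 (negbTE (q_neq1 qX_inj)) orbF.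
by move/eqP.
Qed.

Lemma carlitz_beta1_neq0 : beta 1 != 0.
Proof.
apply/eqP => beta1_0; have := beta_carlitz 1.
rewrite /qcarlitz_rhs !big_ord_recr big_ord0 /= carlitz_beta0 beta1_0.
rewrite !mulr0 subr0 add0r addr0 bin0 expr0 !mulr1 => q_eq1.
by move: (q_neq1 qX_inj); rewrite q_eq1 eqxx.
Qed.

Local Notation mu := (moment (fun n => beta n.+1 / beta 1)).

Lemma mu_comp_ycoord (A B : {poly F}) :
  mu ((A \Po ycoord q) * (B \Po ycoord q)) =
  ((1 - q) * beta 1)^-1 * ymoment q beta ((1 - 'X) * (A * B)).
Proof.
set p := (A \Po ycoord q) * (B \Po ycoord q).
have mu_mulX : mu p = moment beta ('X * p) / beta 1.
  by rewrite moment_mulX /moment mulr_suml; apply: eq_bigr => i _; rewrite mulrA.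
have X_comp : 'X * p = ((1 - q)^-1 *: ((1 - 'X) * (A * B))) \Po ycoord q.
  rewrite comp_polyZ !comp_polyM comp_ycoord_onemX -mul_polyC !mulrA -polyCM.
  by rewrite mulVf ?onem_q_neq0 // polyC1 mul1r.
rewrite mu_mulX X_comp -/(ymoment q beta _) linearZ /= invfM.
by rewrite mulrAC.
Qed.

Lemma qhahn_family_orth i j : i != j -> mu (qhahn_family i * qhahn_family j) = 0.
Proof.
have orth_lt a b : (a < b)%N -> ymoment q beta ((1 - 'X) * (hahn q a * hahn q b)) = 0.
  by move=> lt_ab; apply: ymoment_hahn_orth; rewrite ?size_hahn.
rewrite !qhahn_familyE mu_comp_ycoord.
case: ltngtP => // [lt_ij | lt_ji] _.
- by rewrite orth_lt ?mulr0.
- by rewrite [hahn q i * _]mulrC orth_lt ?mulr0.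
Qed.

Lemma qhahn_family_norm_neq0 n : mu (qhahn_family n * qhahn_family n) != 0.
Proof.
rewrite qhahn_familyE mu_comp_ycoord mulf_neq0 ?ymoment_hahn_norm_neq0 //.
by rewrite invr_neq0 // mulf_neq0 ?onem_q_neq0 ?carlitz_beta1_neq0.
Qed.

End MomentSequence.

Lemma qq_exp_inj : injective (GRing.exp qq).
Proof.
move=> a b; rewrite /qq -!rmorphXn => /eqP; rewrite tofrac_eq => /eqP.
by move/(congr1 (fun p : {poly rat} => size p)); rewrite !size_polyXn => -[].
Qed.

Theorem mainTheorem2 (beta : nat -> K) :
  is_qBernoulliCarlitz beta ->
  is_moment_sequence (fun n => beta n.+1 / beta 1%N) Pfam.
Proof.
move=> carlitz; split => [|n|i j /eqP ne_ij|n].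
- exact/divff/(carlitz_beta1_neq0 qq_exp_inj carlitz).
- exact: size_qhahn_family qq_exp_inj n.
- exact: (qhahn_family_orth qq_exp_inj carlitz ne_ij).
- exact/eqP/(qhahn_family_norm_neq0 qq_exp_inj carlitz).
Qed.
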